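(* For every infinite cardinal $\lambda$ there is an $E$-combination $T=\mathrm{Th}(\mathcal{A}_E)$ of IILU-theories in a language $\Sigma$ with $|\Sigma|=\lambda$ such that $T$ has no $e$-least models and $e\text{-}\mathrm{Sp}(T)\ge\max\{2^{\omega},\lambda\}$.
   Context: A predicate symbol $R$ is non-empty for a complete theory $T$ if $T\vdash\exists\bar x R(\bar x)$, empty otherwise. A complete theory $T$ in a predicate language is language uniform (LU) if for each arity $m$, every permutation of the set of $m$-ary symbols non-empty for $T$ preserves $T$; it is an IILU-theory if it has non-empty predicates and whenever there is a non-empty $m$-ary predicate there are infinitely many non-empty and infinitely many empty $m$-ary predicates. Let $E$ be a binary symbol not in $\Sigma$. The $E$-combination $\mathcal{A}_E$ of a family $(\mathcal{A}_i)_{i\in I}$ of $\Sigma$-structures with disjoint universes is the $(\Sigma\cup\{E\})$-structure on $\bigcup_iA_i$ with $E$ the equivalence relation whose classes are the $A_i$ and each $R\in\Sigma$ interpreted as $\bigcup_iR^{\mathcal{A}_i}$; ''an $E$-combination of IILU-theories'' means $\mathrm{Th}(\mathcal{A}_E)$ where each $\mathrm{Th}(\mathcal{A}_i)$ is an IILU-theory. For a model $\mathcal{M}$ of $T=\mathrm{Th}(\mathcal{A}_E)$, $\mathrm{TH}(\mathcal{M})$ is the set of complete $\Sigma$-theories of the $E$-classes of $\mathcal{M}$ (as induced $\Sigma$-structures). A model $\mathcal{M}$ of $T$ is $e$-least if $\mathrm{TH}(\mathcal{M})\subseteq\mathrm{TH}(\mathcal{N})$ for all $\mathcal{N}\models T$.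 Let $\mathcal{T}_T$ be the set of all theories of $E$-classes of all models of $T$. The $e$-spectrum of a model is $e\text{-}\mathrm{Sp}(\mathcal{M})=|\mathcal{T}_T\setminus\mathrm{TH}(\mathcal{M})|$, and $e\text{-}\mathrm{Sp}(T)=\sup\{e\text{-}\mathrm{Sp}(\mathcal{M})\mid\mathcal{M}\models T\}$. *)

From Stdlib Require Lists.List.
From mathcomp Require Import all_boot.
Set Implicit Arguments.
Unset Strict Implicit.
Unset Printing Implicit Defensive.

Inductive formula (S : Type) (ar : S -> nat) : Type :=
  | FRel (R : S) (v : 'I_(ar R) -> nat)
  | FEq (x y : nat)
  | FNot (phi : formula ar)
  | FAnd (phi psi : formula ar)
  | FEx (x : nat) (phi : formula ar).

Arguments FEq {S ar}.
Arguments FRel {S ar} R v.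
Arguments FNot {S ar} phi.
Arguments FAnd {S ar} phi psi.
Arguments FEx {S ar} x phi.

Record structure (S : Type) (ar : S -> nat) := Structure {
  carrier :> Type;
  interp : forall R : S, ('I_(ar R) -> carrier) -> Prop }.
Arguments interp {S ar} s R _.

Definition upd (M : Type) (a : nat -> M) (x : nat) (m : M) : nat -> M :=
  fun y => if y == x then m else a y.

Fixpoint sat S (ar : S -> nat) (M : structure ar) (a : nat -> M)
    (phi : formula ar) : Prop :=
  match phi with
  | FRel R v => interp M R (fun i => a (v i))
  | FEq x y => a x = a y
  | FNot p => ~ @sat S ar M a p
  | FAnd p q => @sat S ar M a p /\ @sat S ar M a q
  | FEx x p => exists m : M, @sat S ar M (upd a x m) p
  end.
Arguments sat {S ar} M a phi.

Fixpoint fv S (ar : S -> nat) (phi : formula ar) (y : nat) : Prop :=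
  match phi with
  | FRel R v => exists i, v i = y
  | FEq x z => y = x \/ y = z
  | FNot p => @fv S ar p y
  | FAnd p q => @fv S ar p y \/ @fv S ar q y
  | FEx x p => y <> x /\ @fv S ar p y
  end.

Definition sentence S (ar : S -> nat) (phi : formula ar) : Prop :=
  forall y, ~ fv phi y.

Definition theory S (ar : S -> nat) := formula ar -> Prop.

Definition Th S (ar : S -> nat) (M : structure ar) : theory ar :=
  fun phi => sentence phi /\ forall a : nat -> M, sat M a phi.

Fixpoint exs S (ar : S -> nat) (n : nat) (phi : formula ar) : formula ar :=
  match n with
  | 0 => phi
  | n'.+1 => FEx n' (@exs S ar n' phi)
  end.

Definition nonempty_for S (ar : S -> nat) (T : theory ar) (R : S) : Prop :=
  T (exs (ar R) (FRel R (fun i => nat_of_ord i))).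

Fixpoint rename S (ar : S -> nat) (s : S -> S) (H : forall R, ar (s R) = ar R)
    (phi : formula ar) : formula ar :=
  match phi with
  | FRel R v => FRel (s R) (fun i => v (cast_ord (H R) i))
  | FEq x y => FEq x y
  | FNot p => FNot (@rename S ar s H p)
  | FAnd p q => FAnd (@rename S ar s H p) (@rename S ar s H q)
  | FEx x p => FEx x (@rename S ar s H p)
  end.

(* Language uniform: for each arity m, every permutation of the set of m-ary
   symbols non-empty for T (extended by the identity elsewhere) preserves T. *)
Definition LU S (ar : S -> nat) (T : theory ar) : Prop :=
  forall (m : nat) (s : S -> S) (H : forall R, ar (s R) = ar R),
    bijective s ->
    (forall R, ~ (ar R = m /\ nonempty_for T R) -> s R = R) ->
    forall phi, T phi <-> T (rename H phi).

Definition infinite_pred (X : Type) (P : X -> Prop) : Prop :=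
  ~ exists l : seq X, forall x, P x -> Stdlib.Lists.List.In x l.

Definition infinite_type (X : Type) : Prop := infinite_pred (fun _ : X => True).

Definition IILU S (ar : S -> nat) (T : theory ar) : Prop :=
  [/\ LU T,
      exists R, nonempty_for T R &
      forall m : nat, (exists R, ar R = m /\ nonempty_for T R) ->
        infinite_pred (fun R => ar R = m /\ nonempty_for T R) /\
        infinite_pred (fun R => ar R = m /\ ~ nonempty_for T R)].

(* the language Sigma u {E}: None is the new binary symbol E *)
Definition arE S (ar : S -> nat) (o : option S) : nat :=
  match o with Some R => ar R | None => 2 end.

(* E-combination of a family (A_i) (universes made disjoint via sigT) *)
Definition comb S (ar : S -> nat) (I : Type) (A : I -> structure ar)
  : structure (arE ar) :=
  @Structure _ (arE ar) {i : I & A i}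
    (fun o => match o return ('I_(arE ar o) -> {i : I & A i}) -> Prop with
      | None => fun t => projT1 (t ord0) = projT1 (t ord_max)
      | Some R => fun t => exists i (u : 'I_(ar R) -> A i),
                     (forall k, t k = existT _ i (u k)) /\ interp (A i) R u
      end).

Definition pair2 (M : Type) (a b : M) : 'I_2 -> M :=
  fun k => if nat_of_ord k == 0 then a else b.

Definition eclass S (ar : S -> nat) (N : structure (arE ar)) (a : N)
  : structure ar :=
  @Structure _ ar {b : N | interp N None (pair2 a b)}
    (fun R t => interp N (Some R) (fun k => sval (t k))).

Definition model S (ar : S -> nat) (T : theory ar) (N : structure ar) : Prop :=
  inhabited N /\ forall phi, T phi -> forall a : nat -> N, sat N a phi.

Definition TH S (ar : S -> nat) (N : structure (arE ar)) : theory ar -> Prop :=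
  fun Th0 => exists a : N, Th0 = Th (eclass a).

Definition TT S (ar : S -> nat) (T : theory (arE ar)) : theory ar -> Prop :=
  fun Th0 => exists N, model T N /\ TH N Th0.

Definition e_least S (ar : S -> nat) (T : theory (arE ar))
    (M : structure (arE ar)) : Prop :=
  model T M /\ forall N, model T N -> forall Th0, TH M Th0 -> TH N Th0.

(* T_T \ TH(M), whose cardinality is e-Sp(M) *)
Definition spdiff S (ar : S -> nat) (T : theory (arE ar))
    (M : structure (arE ar)) : Type :=
  {Th0 : theory ar | TT T Th0 /\ ~ TH M Th0}.

Definition card_le (A B : Type) : Prop := exists f : A -> B, injective f.
Definition card_lt (A B : Type) : Prop := card_le A B /\ ~ card_le B A.

(* e-Sp(T) = sup_M e-Sp(M) >= |K|, i.e. every cardinal < |K| is exceeded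
   by e-Sp(M) for some model M of T. *)
Definition eSp_ge S (ar : S -> nat) (T : theory (arE ar)) (K : Type) : Prop :=
  forall U : Type, card_lt U K ->
    exists M, model T M /\ card_lt U (spdiff T M).

(** The E-combination of the one-point structures [A_i] in the language of
   unary predicates [K] is rich: [E] is equality and every finite pattern of
   predicates is realised by infinitely many points.  Any two rich structures
   are elementarily equivalent by a back-and-forth argument, so the rich
   structures whose points are labelled by all finite, all cofinite, resp. all
   subsets of [K] are models of [T].  The theory of a one-point E-class
   determines its label set, and no subset of the infinite [K] is both finite
   and cofinite, so the first two models share no E-class theory and there is
   no e-least model.  The third model realises every infinite label set, none
   of which occurs in the first, and [K] carries [2^omega] and [|K|] many
   distinct infinite subsets. *)

From mathcomp Require Import all_boot zify.
From Stdlib Require Import Classical ClassicalEpsilon FunctionalExtensionality.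
From Stdlib Require Lists.List.

Set Implicit Arguments.
Unset Strict Implicit.
Unset Printing Implicit Defensive.

Lemma in_cons_neq (T : Type) (w x : T) (V : list T) :
  List.In w (x :: V) -> w <> x -> List.In w V.
Proof. by case=> [->|]. Qed.

Lemma list_bounded (Y : Type) (g : Y -> nat) (l : list Y) :
  exists n, forall y, List.In y l -> g y < n.
Proof.
elim: l => [|y l [n IH]]; first by exists 0.
exists (n + (g y).+1) => z /= [<-|/IH]; lia.
Qed.

Lemma list_filter_Prop (T : Type) (F : list T) (P : T -> Prop) :
  exists l : list T, forall k, List.In k l <-> List.In k F /\ P k.
Proof.
elim: F => [|k0 F [l IH]]; first by exists nil => k /=; tauto.
have := classic (P k0); case=> Pk0; [exists (k0 :: l)|exists l] => k /=;
  have := IH k; have := classic (k0 = k); case=> [<-|]; tauto.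
Qed.

Lemma infinite_pred_mono (X : Type) (P Q : X -> Prop) :
  infinite_pred P -> (forall x, P x -> Q x) -> infinite_pred Q.
Proof. by move=> HP PQ [l Hl]; apply: HP; exists l => x /PQ /Hl. Qed.

Lemma infinite_pred_range (X : Type) (h : nat -> X) :
  injective h -> infinite_pred (fun x => exists n, x = h n).
Proof.
move=> h_inj [l Hl].
set s := List.map h (List.seq 0 (List.length l).+1).
have s_uniq : List.NoDup s.
  apply: List.NoDup_map_NoDup_ForallPairs; last exact: List.seq_NoDup.
  by move=> x y _ _ /h_inj.
have s_sub : List.incl s l.
  by move=> x /List.in_map_iff [n [<- _]]; apply: Hl; exists n.
have := List.NoDup_incl_length s_uniq s_sub.
rewrite List.length_map List.length_seq; lia.
Qed.

Lemma infinite_type_fresh (X : Type) (l : list X) :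
  infinite_type X -> exists x, ~ List.In x l.
Proof.
move=> Xinf; apply: NNPP => Hn; apply: Xinf; exists l => x _.
by apply: NNPP => Hx; apply: Hn; exists x.
Qed.

Lemma infinite_type_nat_inj (X : Type) :
  infinite_type X -> exists e : nat -> X, injective e.
Proof.
move=> Xinf.
pose fresh_spec l := constructive_indefinite_description _ (infinite_type_fresh l Xinf).
pose fresh l := sval (fresh_spec l).
have freshP l : ~ List.In (fresh l) l := svalP (fresh_spec l).
pose fix chain n := if n is n'.+1 then fresh (chain n') :: chain n' else nil.
have chain_mono m n : m < n -> List.In (fresh (chain m)) (chain n).
  elim: n => [//|n IH]; rewrite ltnS leq_eqVlt => /orP [/eqP->|/IH]; by [left|right].
exists (fun n => fresh (chain n)) => m n E.
case: (ltngtP m n) => // /chain_mono; [rewrite E|rewrite -E] => /freshP [].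
Qed.

Lemma card_lt_le_trans (U X Y : Type) : card_lt U X -> card_le X Y -> card_lt U Y.
Proof.
move=> [[f f_inj] nYU] [g g_inj]; split; first by exists (g \o f); exact: inj_comp.
by move=> [h h_inj]; apply: nYU; exists (h \o g); exact: inj_comp.
Qed.

Section UnaryLanguage.

Variable K : Type.

Definition unary : K -> nat := fun _ => 1.

Local Notation L := (arE unary).

Definition rich (N : structure L) (lab : N -> K -> Prop) : Prop :=
  [/\ forall t : 'I_2 -> N, interp N None t <-> t ord0 = t ord_max,
      forall R (t : 'I_1 -> N), interp N (Some R) t <-> lab (t ord0) R &
      forall (F : list K) (P : K -> Prop) (l : list N), exists n : N,
        ~ List.In n l /\ forall k, List.In k F -> (lab n k <-> P k)].

Fixpoint symbols (phi : formula L) : list K :=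
  match phi with
  | FRel (Some R) _ => R :: nil
  | FRel None _ | FEq _ _ => nil
  | FNot p | FEx _ p => symbols p
  | FAnd p q => List.app (symbols p) (symbols q)
  end.

Section BackAndForth.

Variables (N1 N2 : structure L).
Variables (lab1 : N1 -> K -> Prop) (lab2 : N2 -> K -> Prop).

Definition local_iso (F : list K) (V : list nat) (a : nat -> N1) (b : nat -> N2) :=
  (forall x y, List.In x V -> List.In y V -> (a x = a y <-> b x = b y)) /\
  (forall x, List.In x V -> forall k, List.In k F -> (lab1 (a x) k <-> lab2 (b x) k)).

Lemma local_iso_extend F V a b (x : nat) (m : N1) :
  rich lab2 -> local_iso F V a b ->
  exists n, local_iso F (x :: V) (upd a x m) (upd b x n).
Proof.
move=> [_ _ realise] [iso_eq iso_lab].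
have [[y [Vy [yx aym]]]|fresh] := classic (exists y, List.In y V /\ y <> x /\ a y = m).
- exists (b y); rewrite -aym; split=> [z w Vz Vw|z Vz k Fk]; rewrite /upd.
  + case: eqP => [_|/(in_cons_neq Vz) Vz']; case: eqP => [_|/(in_cons_neq Vw) Vw'];
      by [|exact: iso_eq].
  + by case: eqP => [_|/(in_cons_neq Vz) Vz']; exact: iso_lab.
- have [n [n_new n_lab]] := realise F (lab1 m) (List.map b V).
  have new1 z : List.In z V -> z <> x -> a z <> m.
    by move=> Vz zx azm; apply: fresh; exists z.
  have new2 z : List.In z V -> b z <> n.
    by move=> Vz bzn; apply: n_new; rewrite -bzn; exact: List.in_map.
  exists n; split=> [z w Vz Vw|z Vz k Fk]; rewrite /upd.
  + case: eqP => [zx|/[dup] zx /(in_cons_neq Vz) Vz'];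
    case: eqP => [wx|/[dup] wx /(in_cons_neq Vw) Vw']; try by [|exact: iso_eq].
    * have := new1 w Vw' wx; have := new2 w Vw'; split=> E; congruence.
    * have := new1 z Vz' zx; have := new2 z Vz'; split=> E; congruence.
  + case: eqP => [_|/(in_cons_neq Vz) Vz']; [exact: iff_sym (n_lab k Fk)|exact: iso_lab].
Qed.

End BackAndForth.

Lemma local_iso_sym N1 N2 lab1 lab2 F V a b :
  @local_iso N1 N2 lab1 lab2 F V a b -> local_iso lab2 lab1 F V b a.
Proof. by case=> iso_eq iso_lab; split=> *; apply: iff_sym; auto. Qed.

Lemma local_iso_sat N1 N2 lab1 lab2 : rich lab1 -> rich lab2 ->
  forall (phi : formula L) F V a b,
  (forall k, List.In k (symbols phi) -> List.In k F) ->
  (forall y, fv phi y -> List.In y V) ->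
  @local_iso N1 N2 lab1 lab2 F V a b -> (sat N1 a phi <-> sat N2 b phi).
Proof.
move=> rich1 rich2; have [E1 P1 _] := rich1; have [E2 P2 _] := rich2.
elim=> [[R|] v|x y|p IH|p IHp q IHq|x p IH] F V a b symF fvV iso /=.
- by rewrite P1 P2; apply: (proj2 iso); [apply: fvV; exists ord0|apply: symF; left].
- eapply iff_trans; first exact: E1.
  eapply iff_trans; last exact: iff_sym (E2 _).
  by apply: (proj1 iso); apply: fvV; [exists ord0|exists ord_max].
- by apply: (proj1 iso); apply: fvV; [left|right].
- by rewrite (IH F V a b).
- have symFl k : List.In k (symbols p) -> List.In k F.
    by move=> ?; apply/symF/List.in_or_app; left.
  have symFr k : List.In k (symbols q) -> List.In k F.
    by move=> ?; apply/symF/List.in_or_app; right.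
  rewrite (IHp F V a b symFl _ iso) ?(IHq F V a b symFr _ iso) //;
    by move=> y fvy; apply: fvV => /=; auto.
- have fvV' y : fv p y -> List.In y (x :: V).
    by move=> py; have [->|yx] := classic (y = x); [left|right; apply: fvV].
  split=> [[m pm]|[n pn]].
  + have [n iso'] := local_iso_extend x m rich2 iso.
    by exists n; rewrite -(IH _ _ _ _ symF fvV' iso').
  + have [m iso'] := local_iso_extend x n rich1 (local_iso_sym iso).
    by exists m; rewrite (IH _ _ _ _ symF fvV' (local_iso_sym iso')).
Qed.

Lemma rich_inhabited N lab : @rich N lab -> inhabited N.
Proof. by case=> _ _ realise; have [n _] := realise nil (fun _ => True) nil. Qed.

Lemma rich_model_Th N1 N2 lab1 lab2 :
  @rich N1 lab1 -> @rich N2 lab2 -> model (Th N1) N2.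
Proof.
move=> rich1 rich2; split; first exact: rich_inhabited rich2.
move=> phi [closed holds] b; have [p] := rich_inhabited rich1.
have iso0 : local_iso lab1 lab2 (symbols phi) nil (fun=> p) b by [].
by apply: (local_iso_sat rich1 rich2 _ _ iso0).1 => // y /closed.
Qed.

Definition ex_pred (k : K) : formula unary := FEx 0 (FRel k (fun=> 0)).

Lemma Th_eclass_ex_pred (N : structure L) (lab : N -> K -> Prop) (p : N) k :
  rich lab ->
  Th (eclass p) (ex_pred k) <-> lab p k.
Proof.
case=> E P _; have Epp : interp N None (pair2 p p) by apply/E.
split=> [[_ /(_ (fun=> exist _ p Epp)) [[q Epq]]]|pk].
- by rewrite /upd /= P; move/E: Epq; rewrite /pair2 /= => <-.
- split=> [y /= [y0 [_ /esym /y0]] //|a].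
  by exists (exist _ p Epp); rewrite /upd /= P.
Qed.

Lemma Th_eclass_labels (N1 N2 : structure L) (lab1 : N1 -> K -> Prop)
    (lab2 : N2 -> K -> Prop) (p : N1) (q : N2) :
  rich lab1 -> rich lab2 ->
  Th (eclass p) = Th (eclass q) -> forall k, lab1 p k <-> lab2 q k.
Proof.
move=> rich1 rich2 E k.
by rewrite -(Th_eclass_ex_pred p k rich1) E (Th_eclass_ex_pred q k rich2).
Qed.

Definition labelled (J : Type) (lab : J -> K -> Prop) : structure L :=
  @Structure _ L J
   (fun o => match o return ('I_(L o) -> J) -> Prop with
     | None => fun t => t ord0 = t ord_max
     | Some R => fun t => lab (t ord0) R end).

(* The [nat] component supplies infinitely many copies of every label set. *)
Lemma rich_labelled (X : Type) (lab : X * nat -> K -> Prop) :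
  (forall F (P : K -> Prop), exists x, forall n k, List.In k F -> (lab (x, n) k <-> P k)) ->
  @rich (labelled lab) lab.
Proof.
move=> realise; split=> // F P l.
have [x Hx] := realise F P; have [n Hn] := list_bounded snd l.
by exists (x, n); split=> [/Hn|]; [rewrite ltnn|exact: Hx].
Qed.

Definition fin_lab (x : list K * nat) k := List.In k x.1.
Definition cof_lab (x : list K * nat) k := ~ List.In k x.1.
Definition all_lab (x : (K -> Prop) * nat) k := x.1 k.

Lemma rich_fin : @rich (labelled fin_lab) fin_lab.
Proof.
apply: rich_labelled => F P; have [x Hx] := list_filter_Prop F P.
by exists x => n k Fk; have := Hx k; rewrite /fin_lab /=; tauto.
Qed.

Lemma rich_cof : @rich (labelled cof_lab) cof_lab.
Proof.
apply: rich_labelled => F P; have [x Hx] := list_filter_Prop F (fun k => ~ P k).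
by exists x => n k Fk; have := Hx k; have := NNPP (P k); rewrite /cof_lab /=; tauto.
Qed.

Lemma rich_all : @rich (labelled all_lab) all_lab.
Proof. by apply: rich_labelled => F P; exists P. Qed.

(* [A_((l, P), n)] is a one-point structure whose non-empty predicates are
   those of [Z] patched by [P] on [l]; the tag [n] makes infinitely many copies. *)
Definition index := ((list K * (K -> Prop)) * nat)%type.

Definition patch (Z : K -> Prop) (i : index) (k : K) : Prop :=
  (List.In k i.1.1 /\ i.1.2 k) \/ (~ List.In k i.1.1 /\ Z k).

Definition point (Z : K -> Prop) (i : index) : structure unary :=
  @Structure K unary unit (fun R _ => patch Z i R).

Variable Z : K -> Prop.

Lemma rich_comb : @rich (comb (point Z)) (fun s => patch Z (projT1 s)).
Proof.
split.
- move=> t /=; case: (t ord0) => i []; case: (t ord_max) => j [] /=.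
  by split=> [->|/(f_equal (@projT1 _ _))].
- move=> R t /=; split=> [[i [u [-> //]]]|Zt].
  exists (projT1 (t ord0)), (fun=> tt); split=> // k.
  by rewrite (ord1 k); case: (t ord0) => i [].
- move=> F P l; have [n Hn] := list_bounded (fun s : {i & point Z i} => (projT1 s).2) l.
  exists (existT (fun i => point Z i) ((F, P), n) tt).
  by split=> [/Hn|k Fk]; rewrite /= ?ltnn // /patch /=; tauto.
Qed.

Lemma nonempty_point (i : index) R : nonempty_for (Th (point Z i)) R <-> patch Z i R.
Proof.
split=> [[_ /(_ (fun=> tt)) [] //]|ZR].
split=> [y /= [y0 [j yj]]|a]; last by exists tt.
by apply: y0; rewrite -yj (ord1 j).
Qed.

Lemma sat_point_rename (i : index) (s : K -> K) (H : forall R, unary (s R) = unary R) :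
  (forall R, patch Z i (s R) <-> patch Z i R) ->
  forall phi a, sat (point Z i) a (rename H phi) <-> sat (point Z i) a phi.
Proof.
move=> Hs; elim=> [R v|x y|p IH|p IHp q IHq|x p IH] a //=.
- by rewrite IH.
- by rewrite IHp IHq.
- by split=> [[m]|[m]]; exists m; apply/IH.
Qed.

Lemma fv_rename (s : K -> K) (H : forall R, unary (s R) = unary R) phi y :
  fv (rename H phi) y <-> fv phi y.
Proof.
elim: phi => [R v|x z|p IH|p IHp q IHq|x p IH] //=; try tauto.
split=> [[j <-]|[j <-]]; first by exists (cast_ord (H R) j).
by exists (cast_ord (esym (H R)) j); rewrite cast_ordKV.
Qed.

Lemma LU_point (i : index) : LU (Th (point Z i)).
Proof.
move=> m s H s_bij s_fix phi.
have s_patch R : patch Z i (s R) <-> patch Z i R.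
  have [RR|RR] := classic (unary R = m /\ nonempty_for (Th (point Z i)) R);
    last by rewrite s_fix.
  have [sRR|sRR] := classic (unary (s R) = m /\ nonempty_for (Th (point Z i)) (s R)).
    by rewrite -!nonempty_point; tauto.
  by rewrite (bij_inj s_bij (s_fix _ sRR)).
by split=> [][closed holds]; split=> [y /fv_rename /closed|a] //;
  apply/(sat_point_rename H s_patch).
Qed.

Lemma IILU_point (i : index) :
  infinite_pred Z -> infinite_pred (fun k => ~ Z k) -> IILU (Th (point Z i)).
Proof.
have patch_inf (Q Q' : K -> Prop) : infinite_pred Q ->
    (forall k, ~ List.In k i.1.1 -> Q k -> Q' k) -> infinite_pred Q'.
  move=> Qinf QQ' [l Hl]; apply: Qinf; exists (List.app l i.1.1) => z Qz.
  apply: List.in_or_app; have [|zi] := classic (List.In z i.1.1); [by right|left; auto].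
move=> Zinf nZinf.
have nonempty_inf : infinite_pred (patch Z i).
  by apply: patch_inf Zinf _; rewrite /patch; tauto.
have empty_inf : infinite_pred (fun k => ~ patch Z i k).
  by apply: patch_inf nZinf _; rewrite /patch; tauto.
split; first exact: LU_point.
- have [R ZR] : exists R, patch Z i R.
    by apply: NNPP => Hn; apply: nonempty_inf; exists nil => x Zx; apply: Hn; exists x.
  by exists R; apply/nonempty_point.
- move=> m [R [<- _]]; split.
  + by apply: (infinite_pred_mono nonempty_inf) => x /nonempty_point.
  + by apply: (infinite_pred_mono empty_inf) => x Zx; split=> // /nonempty_point.
Qed.

Local Notation T := (Th (comb (point Z))).

Lemma no_e_least : infinite_type K -> ~ exists M, e_least T M.
Proof.
move=> Kinf [M [[[a] _] least]].
have [x Ex] := least _ (rich_model_Th rich_comb rich_fin) _ (ex_intro _ a erefl).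
have [y Ey] := least _ (rich_model_Th rich_comb rich_cof) _ (ex_intro _ a erefl).
have xy := Th_eclass_labels rich_fin rich_cof (etrans (esym Ex) Ey).
apply: Kinf; exists (List.app x.1 y.1) => k _; apply: List.in_or_app.
have [|xk] := classic (List.In k x.1); [left|right] => //.
by apply: NNPP => /(xy k).
Qed.

(* Every infinite label set occurs in the model [labelled all_lab] but in no
   E-class of [labelled fin_lab]. *)
Lemma card_le_spdiff (X : Type) (Q : X -> K -> Prop) :
  (forall x, infinite_pred (Q x)) ->
  (forall x y, (forall k, Q x k <-> Q y k) -> x = y) ->
  card_le X (spdiff T (labelled fin_lab)).
Proof.
move=> Qinf Qinj.
have inTT x : TT T (Th (@eclass _ _ (labelled all_lab) (Q x, 0))).
  exists (labelled all_lab); split; last by exists (Q x, 0).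
  exact: rich_model_Th rich_comb rich_all.
have notTH x : ~ TH (labelled fin_lab) (Th (@eclass _ _ (labelled all_lab) (Q x, 0))).
  move=> [y Ey]; apply: (Qinf x); exists y.1 => k.
  exact: (proj1 (Th_eclass_labels rich_all rich_fin Ey k)).
exists (fun x => exist _ _ (conj (inTT x) (notTH x)) : spdiff _ _) => x y /(f_equal sval) E.
by apply: Qinj; exact: (Th_eclass_labels rich_all rich_all E).
Qed.

Lemma eSp_ge_comb (X : Type) (Q : X -> K -> Prop) :
  (forall x, infinite_pred (Q x)) ->
  (forall x y, (forall k, Q x k <-> Q y k) -> x = y) ->
  eSp_ge T X.
Proof.
move=> Qinf Qinj U UX; exists (labelled fin_lab).
split; first exact: rich_model_Th rich_comb rich_fin.
exact: card_lt_le_trans UX (card_le_spdiff Qinf Qinj).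
Qed.

End UnaryLanguage.

Section InfiniteType.

Variables (K : Type) (e : nat -> K).
Hypothesis e_inj : injective e.

Definition evens (k : K) := exists n, k = e (2 * n).

Lemma infinite_evens : infinite_pred evens.
Proof. by apply: (infinite_pred_range (h := fun n => e (2 * n))) => m n /e_inj; lia. Qed.

Lemma infinite_not_evens : infinite_pred (fun k => ~ evens k).
Proof.
apply: (infinite_pred_mono (infinite_pred_range (h := fun n => e (2 * n).+1) _)).
  by move=> m n /e_inj; lia.
by move=> k [n ->] [m /e_inj]; lia.
Qed.

Definition cantor_set (f : nat -> bool) (k : K) :=
  exists n, k = e (2 * n) \/ (k = e (2 * n).+1 /\ f n).

Lemma cantor_set_odd f n : cantor_set f (e (2 * n).+1) <-> f n.
Proof.
split=> [[m [/e_inj|[/e_inj Emn fm]]]|fn]; first lia; last by exists n; right.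
by have -> : n = m by lia.
Qed.

Lemma cantor_set_inj f g : (forall k, cantor_set f k <-> cantor_set g k) -> f = g.
Proof.
move=> fg; apply: functional_extensionality => n.
by apply/idP/idP; rewrite -!cantor_set_odd; apply fg.
Qed.

Lemma infinite_cantor_set f : infinite_pred (cantor_set f).
Proof.
by apply: (infinite_pred_mono infinite_evens) => k [n ->]; exists n; left.
Qed.

End InfiniteType.

Lemma infinite_setC1 (K : Type) (k0 : K) : infinite_type K -> infinite_pred (fun k => k <> k0).
Proof.
move=> Kinf [l Hl]; apply: Kinf; exists (k0 :: l) => k _ /=.
by have [|nk0] := classic (k0 = k); [left|right; apply: Hl => E; apply: nk0].
Qed.

Lemma neq_pred_inj (K : Type) (k0 k1 : K) : (forall k, k <> k0 <-> k <> k1) -> k0 = k1.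
Proof. by move=> H; apply: NNPP => k01; apply: (proj2 (H k0)). Qed.

Theorem proposition5p3 (K : Type) (HK : infinite_type K) :
  exists (S : Type) (ar : S -> nat) (I : Type) (A : I -> structure ar),
    (exists f : S -> K, bijective f) /\
    inhabited I /\
    (forall i, inhabited (A i)) /\
    (forall i, IILU (Th (A i))) /\
    (~ exists M, e_least (Th (comb A)) M) /\
    eSp_ge (Th (comb A)) (nat -> bool) /\
    eSp_ge (Th (comb A)) K.
Proof.
have [e e_inj] := infinite_type_nat_inj HK.
exists K, (@unary K), (index K), (point (evens e)).
split; first by exists id; exists id.
split; first exact: inhabits ((nil, fun=> False), 0).
split; first by move=> i; exact: inhabits tt.
split; first by move=> i; exact: IILU_point (infinite_evens e_inj) (infinite_not_evens e_inj).
split; first exact: no_e_least.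
split.
- exact: eSp_ge_comb _ (infinite_cantor_set e_inj) (cantor_set_inj e_inj).
- exact: eSp_ge_comb _ (fun k0 => infinite_setC1 HK) (@neq_pred_inj K).
Qed.
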